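(* Let $C$ be a finite set of constraints over propositional variables $x\in\{\pm1\}^n$ and real variables $y\in\mathbb{R}^m$, let $F=\bigwedge_{c\in C}c$, and let $w_c>0$ be a weight for each $c\in C$. Let $\mathcal{F}_w(a,b)=\sum_{c\in C}w_c\, f_c(a,b)$ for $(a,b)\in[-1,1]^n\times\mathbb{R}^m$, where $f_c(a,b)$ is the multilinear extension (in the propositional variables) of the extended Walsh–Fourier expansion of $c$, as defined in the context. Then $F$ is satisfiable if and only if $$\min_{a\in[-1,1]^n,\ b\in\mathbb{R}^m}\mathcal{F}_w(a,b)=-\sum_{c\in C}w_c .$$
   Context: Truth values are encoded as $-1$ = True and $+1$ = False. There are $k$ atoms $\alpha_1,\dots,\alpha_k$; each atom is a linear (in)equality $\alpha_i:\ \sum_{j=1}^m q_{i,j}y_j-q_{i,0}\bowtie_i 0$ with $\bowtie_i\in\{=,<,\le,>,\ge\}$ and real coefficients $q_{i,j}$. Its indicator is $\delta_i(y)=-1$ if $\alpha_i$ holds at $y$ and $\delta_i(y)=1$ otherwise; write $\delta(y)=(\delta_1(y),\dots,\delta_k(y))$. Each constraint $c\in C$ is a Boolean combination of the propositional variables and atoms, represented as $f_c:\{\pm1\}^n\times\mathbb{R}^m\to\{\pm1\}$ with $f_c(x,y)=-1$ iff $c$ is true at $(x,y)$; thus $f_c(x,y)=\tilde f_c(x,\delta(y))$ for a Boolean function $\tilde f_c:\{\pm1\}^{n+k}\to\{\pm1\}$. For $S\subseteq[n]$, $T\subseteq[k]$ put $\hat f_c(S,T)=\mathbb{E}_{(x,z)\sim\{\pm1\}^{n+k}\text{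 uniform}}\big[\tilde f_c(x,z)\prod_{i\in S}x_i\prod_{i\in T}z_i\big]$, so that $f_c(x,y)=\sum_{S\subseteq[n],T\subseteq[k]}\hat f_c(S,T)\prod_{i\in S}x_i\prod_{i\in T}\delta_i(y)$ (the extended Walsh–Fourier expansion). This formula is used to define $f_c(a,b)$ for all $a\in[-1,1]^n$, $b\in\mathbb{R}^m$ by replacing $x_i$ with $a_i$ and $y$ with $b$. $F$ is satisfiable iff there exist $x\in\{\pm1\}^n$, $y\in\mathbb{R}^m$ with $f_c(x,y)=-1$ for all $c\in C$. *)

From HB Require Import structures.
From mathcomp Require Import all_boot all_order all_algebra.
Set Implicit Arguments. Unset Strict Implicit. Unset Printing Implicit Defensive.
Import Order.TTheory GRing.Theory Num.Theory.
Local Open Scope ring_scope.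

Inductive relop := REq | RLt | RLe | RGt | RGe.

Definition rel_holds (R : realDomainType) (o : relop) (v : R) : bool :=
  match o with
  | REq => v == 0 | RLt => v < 0 | RLe => v <= 0 | RGt => 0 < v | RGe => 0 <= v
  end.

(* Encoding of truth values: -1 = True, +1 = False. *)
Definition pm (R : realDomainType) (b : bool) : R := if b then -1 else 1.

Definition atom_holds (R : realDomainType) (m k : nat)
  (q : 'I_k -> 'I_m -> R) (q0 : 'I_k -> R) (rel : 'I_k -> relop)
  (i : 'I_k) (y : 'I_m -> R) : bool :=
  rel_holds (rel i) (\sum_(j < m) q i j * y j - q0 i).

Definition delta (R : realDomainType) (m k : nat)
  (q : 'I_k -> 'I_m -> R) (q0 : 'I_k -> R) (rel : 'I_k -> relop)
  (i : 'I_k) (y : 'I_m -> R) : R :=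
  pm R (atom_holds q q0 rel i y).

(* A Boolean function {±1}^{n+k} -> {±1} is given by tf : {ffun 'I_n -> bool} ->
   {ffun 'I_k -> bool} -> bool, where a bit 'true' stands for the value -1 (True)
   and the output 'true' means the value -1 (constraint true). *)
Definition tfR (R : realDomainType) (n k : nat)
  (tf : {ffun 'I_n -> bool} -> {ffun 'I_k -> bool} -> bool)
  (x : {ffun 'I_n -> bool}) (z : {ffun 'I_k -> bool}) : R := pm R (tf x z).

Definition fourier_coef (R : realFieldType) (n k : nat)
  (tf : {ffun 'I_n -> bool} -> {ffun 'I_k -> bool} -> bool)
  (S : {set 'I_n}) (T : {set 'I_k}) : R :=
  (2 ^+ (n + k))^-1 *
  \sum_(x : {ffun 'I_n -> bool}) \sum_(z : {ffun 'I_k -> bool})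
     tfR R tf x z * (\prod_(i in S) pm R (x i)) * (\prod_(i in T) pm R (z i)).

Definition fc (R : realFieldType) (n m k : nat)
  (q : 'I_k -> 'I_m -> R) (q0 : 'I_k -> R) (rel : 'I_k -> relop)
  (tf : {ffun 'I_n -> bool} -> {ffun 'I_k -> bool} -> bool)
  (a : 'I_n -> R) (b : 'I_m -> R) : R :=
  \sum_(S : {set 'I_n}) \sum_(T : {set 'I_k})
    fourier_coef R tf S T * (\prod_(i in S) a i)
      * (\prod_(i in T) delta q q0 rel i b).

Definition constraint_true (R : realDomainType) (n m k : nat)
  (q : 'I_k -> 'I_m -> R) (q0 : 'I_k -> R) (rel : 'I_k -> relop)
  (tf : {ffun 'I_n -> bool} -> {ffun 'I_k -> bool} -> bool)
  (x : {ffun 'I_n -> bool}) (y : 'I_m -> R) : bool :=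
  tf x [ffun i => atom_holds q q0 rel i y].

Definition satisfiable (R : realDomainType) (n m k : nat) (C : finType)
  (q : 'I_k -> 'I_m -> R) (q0 : 'I_k -> R) (rel : 'I_k -> relop)
  (tf : C -> {ffun 'I_n -> bool} -> {ffun 'I_k -> bool} -> bool) : Prop :=
  exists (x : {ffun 'I_n -> bool}) (y : 'I_m -> R),
    forall c : C, pm R (constraint_true q q0 rel (tf c) x y) = -1.

Definition Fw (R : realFieldType) (n m k : nat) (C : finType)
  (q : 'I_k -> 'I_m -> R) (q0 : 'I_k -> R) (rel : 'I_k -> relop)
  (tf : C -> {ffun 'I_n -> bool} -> {ffun 'I_k -> bool} -> bool)
  (w : C -> R) (a : 'I_n -> R) (b : 'I_m -> R) : R :=
  \sum_(c : C) w c * fc q q0 rel (tf c) a b.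

Definition in_cube (R : realDomainType) (n : nat) (a : 'I_n -> R) : Prop :=
  forall i, -1 <= a i <= 1.

From HB Require Import structures.
From mathcomp Require Import all_boot all_order all_algebra.
From mathcomp Require Import reals.
From mathcomp Require Import ring lra.
Import Order.TTheory GRing.Theory Num.Theory.
Local Open Scope ring_scope.
Set Implicit Arguments. Unset Strict Implicit.

(* For [a] in the cube, [p_a(x) = prod_i (1 + x_i a_i) / 2] is a probability
   distribution on the vertices [x] of the cube, and by orthogonality of the
   Walsh characters the expansion [f_c(a, b)] is the [p_a]-average of the
   values [f_c(x, b)] at the vertices.  Each of these is [-1] or [1], so
   [f_c >= -1] on the domain, with equality at a vertex [x] iff [c] holds at
   [(x, b)].  Hence [F_w >= - sum_c w_c], and if this value is attained at
   [(a, b)] then, the weights being positive, every [f_c(a, b) = -1], so every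
   vertex in the support of [p_a] satisfies all constraints; the vertex
   rounding [a] to its signs has positive weight. *)

Lemma sum_prod_subsets (R : comPzRingType) (I : finType) (u : I -> R) :
  \sum_(S : {set I}) \prod_(i in S) u i = \prod_i (u i + 1).
Proof.
rewrite (bigA_distr 1 +%R u (fun=> 1)) /=.
apply: eq_bigr => S _; rewrite [LHS]big_mkcond /=.
by apply: eq_bigr => i _; case: (i \in S).
Qed.

Lemma ffun_neq_exists (aT : finType) (rT : eqType) (f g : {ffun aT -> rT}) :
  f != g -> exists i, f i != g i.
Proof.
move=> neq_fg; apply/existsP; apply: contraR neq_fg => /existsPn eq_fg.
by apply/eqP/ffunP => i; apply/eqP; rewrite -[_ == _]negbK eq_fg.
Qed.

Section SignEncoding.
Variable R : realDomainType.

Lemma pm_mul_self b : pm R b * pm R b = 1.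
Proof. by case: b; rewrite /pm ?mulrNN mulr1. Qed.

Lemma pm_mul_neq b b' : b != b' -> pm R b * pm R b' + 1 = 0.
Proof. by case: b; case: b' => //= _; rewrite /pm; lra. Qed.

Lemma pm_add1_ge0 b : 0 <= pm R b + 1.
Proof. by case: b; rewrite /pm; lra. Qed.

Lemma in_cube_pm n (x : {ffun 'I_n -> bool}) : in_cube (fun i => pm R (x i)).
Proof. by move=> i; case: (x i); rewrite /pm; lra. Qed.

End SignEncoding.

Section CubeWeight.
Variable R : realFieldType.

Definition cube_weight n (a : 'I_n -> R) (x : {ffun 'I_n -> bool}) : R :=
  \prod_i ((1 + pm R (x i) * a i) / 2).

Lemma cube_weight_ge0 n (a : 'I_n -> R) x : in_cube a -> 0 <= cube_weight a x.
Proof.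
move=> a_cube; apply: prodr_ge0 => i _; have := a_cube i.
by case: (x i); rewrite /pm; lra.
Qed.

Lemma cube_weight_sign_gt0 n (a : 'I_n -> R) :
  in_cube a -> 0 < cube_weight a [ffun i => a i <= 0].
Proof.
move=> a_cube; apply: prodr_gt0 => i _; have := a_cube i.
by rewrite ffunE /pm; case: (lerP (a i) 0); lra.
Qed.

Lemma sum_cube_weight n (a : 'I_n -> R) : \sum_x cube_weight a x = 1.
Proof.
rewrite /cube_weight -(bigA_distr_bigA (fun i b => (1 + pm R b * a i) / 2)) /=.
by apply: big1 => i _; rewrite big_bool /pm /=; field.
Qed.

Lemma cube_weight_vertex n (x x' : {ffun 'I_n -> bool}) :
  cube_weight (fun i => pm R (x i)) x' = (x' == x)%:R.
Proof.
have [->|/ffun_neq_exists[i neq_i]] := eqVneq x' x.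
  by apply: big1 => i _; rewrite pm_mul_self; field.
by rewrite /cube_weight (bigD1 i) //= [1 + _]addrC pm_mul_neq // !mul0r.
Qed.

Lemma sum_prod_pm_scale n (a : 'I_n -> R) (x : {ffun 'I_n -> bool}) :
  \sum_(S : {set 'I_n}) \prod_(i in S) (pm R (x i) * a i)
    = 2 ^+ n * cube_weight a x.
Proof.
rewrite sum_prod_subsets /cube_weight.
under [in RHS]eq_bigr do rewrite mulrC.
rewrite big_split /= prodr_const card_ord mulrA -exprMn mulfV ?pnatr_eq0 //.
by rewrite expr1n mul1r; apply: eq_bigr => i _; rewrite addrC.
Qed.

Lemma sum_prod_pm_orthogonal k (z z' : {ffun 'I_k -> bool}) :
  \sum_(T : {set 'I_k}) \prod_(i in T) (pm R (z i) * pm R (z' i))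
    = (z == z')%:R * 2 ^+ k.
Proof.
rewrite sum_prod_subsets; have [->|/ffun_neq_exists[i neq_i]] := eqVneq z z'.
  rewrite mul1r -[in RHS](card_ord k) -prodr_const.
  by apply: eq_bigr => i _; rewrite pm_mul_self.
by rewrite (bigD1 i) //= pm_mul_neq // !mul0r.
Qed.

End CubeWeight.

Section Expansion.
Variables (R : realFieldType) (n m k : nat).
Variables (q : 'I_k -> 'I_m -> R) (q0 : 'I_k -> R) (rel : 'I_k -> relop).
Variable tf : {ffun 'I_n -> bool} -> {ffun 'I_k -> bool} -> bool.

Definition atoms_at (b : 'I_m -> R) : {ffun 'I_k -> bool} :=
  [ffun i => atom_holds q q0 rel i b].

Lemma fc_average (a : 'I_n -> R) b :
  fc q q0 rel tf a b = \sum_x cube_weight a x * pm R (tf x (atoms_at b)).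
Proof.
have delta_atoms i : delta q q0 rel i b = pm R (atoms_at b i) by rewrite ffunE.
have pow2_neq0 l : (2 ^+ l : R) != 0 by rewrite expf_eq0 pnatr_eq0 andbF.
rewrite /fc; set c := (2 ^+ (n + k))^-1 : R.
transitivity (\sum_(S : {set 'I_n}) \sum_(T : {set 'I_k}) \sum_x \sum_z
   (c * tfR R tf x z * \prod_(i in S) (pm R (x i) * a i)
      * \prod_(i in T) (pm R (z i) * pm R (atoms_at b i)))).
  apply: eq_bigr => S _; apply: eq_bigr => T _.
  rewrite /fourier_coef -/c mulr_sumr !mulr_suml; apply: eq_bigr => x _.
  rewrite mulr_sumr !mulr_suml; apply: eq_bigr => z _.
  under [X in _ * X = _]eq_bigr do rewrite delta_atoms.
  by rewrite !big_split /=; ring.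
under eq_bigr do rewrite exchange_big.
rewrite exchange_big; apply: eq_bigr => x _.
under eq_bigr do rewrite exchange_big.
rewrite exchange_big /=.
under eq_bigr => z _.
  under eq_bigr do rewrite -mulr_sumr.
  rewrite -mulr_suml -mulr_sumr sum_prod_pm_scale sum_prod_pm_orthogonal.
  over.
rewrite (bigD1 (atoms_at b)) //= big1 => [|z /negbTE ->]; last by rewrite !mul0r !mulr0.
by rewrite eqxx addr0 /c exprD /tfR mul1r; field; rewrite !pow2_neq0.
Qed.

Lemma fc_add1 (a : 'I_n -> R) b :
  fc q q0 rel tf a b + 1
    = \sum_x cube_weight a x * (pm R (tf x (atoms_at b)) + 1).
Proof.
rewrite fc_average -[X in _ + X](sum_cube_weight a) -big_split /=.
by apply: eq_bigr => x _; rewrite mulrDr mulr1.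
Qed.

Lemma fc_ge_m1 (a : 'I_n -> R) b : in_cube a -> -1 <= fc q q0 rel tf a b.
Proof.
move=> a_cube; rewrite -subr_ge0 opprK fc_add1; apply: sumr_ge0 => x _.
by rewrite mulr_ge0 ?cube_weight_ge0 ?pm_add1_ge0.
Qed.

Lemma fc_vertex (x : {ffun 'I_n -> bool}) b :
  fc q q0 rel tf (fun i => pm R (x i)) b = pm R (tf x (atoms_at b)).
Proof.
rewrite fc_average (bigD1 x) //= big1 => [|x' /negbTE neq_x'].
  by rewrite cube_weight_vertex eqxx mul1r addr0.
by rewrite cube_weight_vertex neq_x' mul0r.
Qed.

Lemma fc_eq_m1_sign_vertex (a : 'I_n -> R) b :
  in_cube a -> fc q q0 rel tf a b = -1 -> tf [ffun i => a i <= 0] (atoms_at b).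
Proof.
set s := [ffun i => a i <= 0] => a_cube /eqP.
rewrite -subr_eq0 opprK fc_add1 => /eqP/psumr_eq0P vanish.
have /eqP : cube_weight a s * (pm R (tf s (atoms_at b)) + 1) = 0.
  by apply: vanish => // x _; rewrite mulr_ge0 ?cube_weight_ge0 ?pm_add1_ge0.
rewrite mulf_eq0 gt_eqF ?cube_weight_sign_gt0 //=.
by case: (tf s _) => //; rewrite /pm => /eqP; lra.
Qed.

End Expansion.

Section Objective.
Variables (R : realFieldType) (n m k : nat) (C : finType).
Variables (q : 'I_k -> 'I_m -> R) (q0 : 'I_k -> R) (rel : 'I_k -> relop).
Variable tf : C -> {ffun 'I_n -> bool} -> {ffun 'I_k -> bool} -> bool.
Variable w : C -> R.
Hypothesis w_gt0 : forall c, 0 < w c.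

Lemma Fw_ge (a : 'I_n -> R) b :
  in_cube a -> - \sum_c w c <= Fw q q0 rel tf w a b.
Proof.
move=> a_cube; rewrite /Fw -sumrN; apply: ler_sum => c _.
by rewrite -mulrN1 ler_pM2l ?w_gt0 ?fc_ge_m1.
Qed.

Lemma Fw_eq_min (a : 'I_n -> R) b :
  in_cube a -> Fw q q0 rel tf w a b = - \sum_c w c ->
  forall c, fc q q0 rel (tf c) a b = -1.
Proof.
move=> a_cube; have fc_add1_ge0 c : 0 <= fc q q0 rel (tf c) a b + 1.
  by rewrite -[0](addNr 1) lerD2r fc_ge_m1.
move=> /eqP; rewrite -subr_eq0 opprK /Fw -big_split /=.
under eq_bigr => c' _ do rewrite -{2}(mulr1 (w c')) -mulrDr.
move=> /eqP/psumr_eq0P vanish c; apply/eqP; rewrite -subr_eq0 opprK.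
have /eqP : w c * (fc q q0 rel (tf c) a b + 1) = 0.
  by apply: vanish => // c' _; exact: mulr_ge0 (ltW (w_gt0 c')) (fc_add1_ge0 c').
by rewrite mulf_eq0 gt_eqF ?w_gt0.
Qed.

End Objective.

Theorem theorem1 (R : realType) (n m k : nat) (C : finType)
  (q : 'I_k -> 'I_m -> R) (q0 : 'I_k -> R) (rel : 'I_k -> relop)
  (tf : C -> {ffun 'I_n -> bool} -> {ffun 'I_k -> bool} -> bool)
  (w : C -> R) (hw : forall c, 0 < w c) :
  satisfiable q q0 rel tf <->
  ((exists (a : 'I_n -> R) (b : 'I_m -> R),
       in_cube a /\ Fw q q0 rel tf w a b = - \sum_(c : C) w c) /\
   (forall (a : 'I_n -> R) (b : 'I_m -> R),
       in_cube a -> - \sum_(c : C) w c <= Fw q q0 rel tf w a b)).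
Proof.
split=> [[x [y sat_xy]]|[[a [b [a_cube Fw_ab]]] _]].
  split; last exact: Fw_ge.
  exists (fun i => pm R (x i)), y; split; first exact: in_cube_pm.
  rewrite /Fw -sumrN; apply: eq_bigr => c _.
  by rewrite fc_vertex -[RHS]mulrN1 -(sat_xy c).
exists [ffun i => a i <= 0], b => c.
by rewrite /constraint_true fc_eq_m1_sign_vertex ?(Fw_eq_min hw).
Qed.
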